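(* Let $A\in\mathbb{R}^{m\times n}$, $b\in\mathbb{R}^m$ and $\delta\ge 0$, and assume $\{x\in\mathbb{R}^n:\|Ax-b\|\le\delta\}\neq\emptyset$. Then for every $\rho>0$ the problem $$\min_{x,v\in\mathbb{R}^n}\{\langle e,e-v\rangle+\rho\langle v,|x|\rangle:\ \|Ax-b\|\le\delta,\ 0\le v\le e\}$$ has a nonempty set of (globally) optimal solutions.
   Context: $\|\cdot\|$ is the Euclidean norm, $e\in\mathbb{R}^n$ is the all-ones vector, $|x|$ is the componentwise absolute value, and vector inequalities are componentwise. *)

From HB Require Import structures.
From mathcomp Require Import all_boot all_order all_algebra.
From mathcomp Require Import reals.
Set Implicit Arguments. Unset Strict Implicit. Unset Printing Implicit Defensive.
Import Order.TTheory GRing.Theory Num.Theory.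
Local Open Scope ring_scope.

Definition enorm (R : realType) (k : nat) (u : 'cV[R]_k) : R :=
  Num.sqrt (\sum_(i < k) (u i 0) ^+ 2).

Definition dotv (R : realType) (k : nat) (u w : 'cV[R]_k) : R :=
  \sum_(i < k) u i 0 * w i 0.

Definition onesv (R : realType) (k : nat) : 'cV[R]_k := const_mx 1.

Definition absv (R : realType) (k : nat) (u : 'cV[R]_k) : 'cV[R]_k :=
  map_mx (fun a => `|a|) u.

Definition objective (R : realType) (n : nat) (rho : R) (x v : 'cV[R]_n) : R :=
  dotv (onesv R n) (onesv R n - v) + rho * dotv v (absv x).

Definition feasible (R : realType) (m n : nat) (A : 'M[R]_(m, n)) (b : 'cV[R]_m)
  (delta : R) (x v : 'cV[R]_n) : Prop :=
  enorm (A *m x - b) <= delta /\ (forall i, 0 <= v i 0 <= 1).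

From HB Require Import structures.
From mathcomp Require Import all_boot all_order all_algebra.
From mathcomp Require Import reals lra.
From mathcomp Require Import all_classical all_analysis.
Import Order.TTheory GRing.Theory Num.Theory.
Import numFieldTopology.Exports numFieldNormedType.Exports.
Set Implicit Arguments. Unset Strict Implicit. Unset Printing Implicit Defensive.
Local Open Scope ring_scope.

(* For fixed [x] the best [v] is the indicator of [S = {i | rho |x i| < 1}], with value
   [rho * sum_(i in S) |x i| + #|~: S|].  So the problem is the minimum, over the finitely many
   sets [S], of the problems "minimise the seminorm [sum_(i in S) |x i|] on the feasible set".
   Each of these is attained: replacing [x] by a solution [z] of [A z = A x, z_S = x_S] chosen
   linearly in [(A x, x_S)] changes neither feasibility nor the seminorm, and on a sublevel set
   of the seminorm it keeps [z] in a fixed box, where the extreme value theorem applies. *)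

Lemma enorm_ge0 (R : realType) k (u : 'cV[R]_k) : 0 <= enorm u.
Proof. exact: sqrtr_ge0. Qed.

Lemma coord_le_enorm (R : realType) k (u : 'cV[R]_k) i : `|u i 0| <= enorm u.
Proof.
rewrite /enorm -sqrtr_sqr ler_sqrt; last by apply: sumr_ge0 => j _; exact: sqr_ge0.
by rewrite (bigD1 i) //= lerDl; apply: sumr_ge0 => j _; exact: sqr_ge0.
Qed.

Section RangeSolution.
Variables (F : fieldType) (p n : nat) (N : 'M[F]_(p, n)).

Definition range_solve : 'M[F]_(n, p) := (@pinvmx F n p N^T)^T.

Lemma range_solveK (x : 'cV[F]_n) : N *m (range_solve *m (N *m x)) = N *m x.
Proof.
apply: trmx_inj; rewrite !trmx_mul trmxK.
have xN_in_range : ((x^T *m N^T) <= N^T)%MS by exact: submxMl.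
by move: (mulmxKpV xN_in_range); rewrite !mulmxA.
Qed.

End RangeSolution.

Lemma range_solve_col_mx (F : fieldType) p q n (A : 'M[F]_(p, n)) (D : 'M[F]_(q, n))
    (x : 'cV[F]_n) :
  let z := range_solve (col_mx A D) *m (col_mx A D *m x) in
  A *m z = A *m x /\ D *m z = D *m x.
Proof. by move=> z; apply/eq_col_mx; rewrite -!mul_col_mx; exact: range_solveK. Qed.

Lemma mulmx_coord_bound (R : realType) p n (P : 'M[R]_(n, p)) (u : 'cV[R]_p)
    (M : R) i :
  (forall k, `|u k 0| <= M) -> `|(P *m u) i 0| <= \sum_k `|P i k| * M.
Proof.
move=> uM; rewrite mxE; apply: le_trans (ler_norm_sum _ _ _) _.
by apply: ler_sum => k _; rewrite normrM ler_wpM2l.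
Qed.

Section Masks.
Variables (R : realType) (n : nat) (S : {set 'I_n}).

Definition norm1_on (x : 'cV[R]_n) : R := \sum_(i in S) `|x i 0|.

Definition indicator_cV : 'cV[R]_n := \col_i (i \in S)%:R.

Definition mask_mx : 'M[R]_n := diag_mx indicator_cV^T.

Lemma mask_mxE (x : 'cV[R]_n) i : (mask_mx *m x) i 0 = (i \in S)%:R * x i 0.
Proof. by rewrite mul_diag_mx !mxE. Qed.

Lemma norm1_on_ge0 (x : 'cV[R]_n) : 0 <= norm1_on x.
Proof. exact: sumr_ge0. Qed.

Lemma norm1_on_mask (x y : 'cV[R]_n) :
  mask_mx *m x = mask_mx *m y -> norm1_on x = norm1_on y.
Proof.
move=> Exy; apply: eq_bigr => i iS.
by have := congr1 (fun u : 'cV[R]_n => u i 0) Exy; rewrite !mask_mxE iS !mul1r => ->.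
Qed.

Lemma mask_coord_le (x : 'cV[R]_n) i : `|(mask_mx *m x) i 0| <= norm1_on x.
Proof.
rewrite mask_mxE; case: (boolP (i \in S)) => iS; last by rewrite mul0r normr0 norm1_on_ge0.
by rewrite mul1r /norm1_on (bigD1 i) //= lerDl sumr_ge0.
Qed.

Lemma norm1_on_continuous (T : topologicalType) (f : T -> 'cV[R]_n) :
  (forall i, continuous (fun t => f t i 0)) -> continuous (fun t => norm1_on (f t)).
Proof.
move=> fc t; apply: continuous_big => //; first exact: add_continuous.
by move=> i _ s; apply: (continuous_comp (fc i s)); exact: norm_continuous.
Qed.

End Masks.

Lemma enorm_continuous (R : realType) (T : topologicalType) k (f : T -> 'cV[R]_k) :
  (forall i, continuous (fun t => f t i 0)) -> continuous (fun t => enorm (f t)).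
Proof.
move=> fc t; apply: (continuous_comp _ (@sqrt_continuous R _)).
apply: continuous_big => //; first exact: add_continuous.
by move=> i _ s; rewrite /GRing.exp /=; apply: continuousM; exact: fc.
Qed.

Lemma trmx_coord_continuous (R : realType) n i :
  continuous (fun r : 'rV[R]_n => r^T i 0).
Proof.
have -> : (fun r : 'rV[R]_n => r^T i 0) = (fun r => r 0 i).
  by apply: funext => r; rewrite mxE.
exact: coord_continuous.
Qed.

Lemma affine_coord_continuous (R : realType) m n (A : 'M[R]_(m, n)) (b : 'cV[R]_m) i :
  continuous (fun r : 'rV[R]_n => (A *m r^T - b) i 0).
Proof.
have -> : (fun r : 'rV[R]_n => (A *m r^T - b) i 0) =
          (fun r => \sum_j A i j * r^T j 0 - b i 0).
  by apply: funext => r; rewrite !mxE.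
move=> r; apply: continuousB; last exact: cst_continuous.
apply: continuous_big => //; first exact: add_continuous.
by move=> j _ s; apply: continuousM; [exact: cst_continuous | exact: trmx_coord_continuous].
Qed.

Local Open Scope classical_set_scope.
Local Open Scope ring_scope.

Lemma continuous_min_box_rV (R : realType) n (K : set 'rV[R]_n)
    (f : 'rV[R]_n -> R) (C : 'I_n -> R) :
  closed K -> continuous f -> K !=set0 ->
  (forall y, K y ->
     exists2 z, (K z /\ forall i, `|z 0 i| <= C i) & f z <= f y) ->
  exists2 c, K c & forall y, K y -> f c <= f y.
Proof.
move=> clK fc [y0 Ky0] reduce.
pose B := [set r : 'rV[R]_n | forall i, `[- C i, C i]%classic (r 0 i)].
have inB (r : 'rV[R]_n) : (forall i, `|r 0 i| <= C i) -> B r.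
  by move=> rC i; rewrite /= in_itv /= -ler_norml.
have cB : compact B := rV_compact (fun i => @segment_compact R (- C i) (C i)).
have [z0 [Kz0 z0C] _] := reduce y0 Ky0.
have ne : (B `&` K) !=set0 by exists z0; split; [exact: inB|].
have [c] := EVT_min_rV ne (compact_closedI cB clK) (continuous_subspaceT fc).
rewrite inE => -[_ Kc] cmin; exists c => // y Ky.
have [z [Kz zC] fzy] := reduce y Ky; apply: le_trans fzy.
by apply: cmin; rewrite inE; split; [exact: inB|].
Qed.

Section L1OnFeasibleSet.
Variables (R : realType) (m n : nat) (A : 'M[R]_(m, n)) (b : 'cV[R]_m).
Variables (delta : R) (S : {set 'I_n}).

Let N := col_mx A (mask_mx R S).
Let P := range_solve N.
Let proj (y : 'cV[R]_n) := P *m (N *m y).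

Lemma proj_mulmx y : A *m proj y = A *m y.
Proof. by case: (range_solve_col_mx A (mask_mx R S) y). Qed.

Lemma proj_norm1_on y : norm1_on S (proj y) = norm1_on S y.
Proof.
by apply: norm1_on_mask; case: (range_solve_col_mx A (mask_mx R S) y).
Qed.

Lemma proj_coord_bound y i :
  `|proj y i 0| <= \sum_k `|P i k| * (enorm (A *m y - b) + norm1_on S y + \sum_j `|b j 0|).
Proof.
apply: mulmx_coord_bound => k.
have e0 := enorm_ge0 (A *m y - b); have g0 := norm1_on_ge0 S y.
have b0 : 0 <= \sum_j `|b j 0| by rewrite sumr_ge0.
rewrite mul_col_mx; case: (split_ordP k) => k' ->; last first.
  by rewrite col_mxEd; have := mask_coord_le S y k'; lra.
rewrite col_mxEu.
have -> : (A *m y) k' 0 = (A *m y - b) k' 0 + b k' 0 by rewrite !mxE subrK.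
have h1 := coord_le_enorm (A *m y - b) k'.
have h2 : `|b k' 0| <= \sum_j `|b j 0| by rewrite (bigD1 k') //= lerDl sumr_ge0.
by apply: le_trans (ler_normD _ _) _; lra.
Qed.

Lemma exists_norm1_on_min :
  (exists x : 'cV[R]_n, enorm (A *m x - b) <= delta) ->
  exists2 x : 'cV[R]_n, enorm (A *m x - b) <= delta &
    forall y, enorm (A *m y - b) <= delta -> norm1_on S x <= norm1_on S y.
Proof.
move=> [x0 x0_feas].
pose K := [set r : 'rV[R]_n | enorm (A *m r^T - b) <= delta].
pose C i := \sum_k `|P i k| * (delta + norm1_on S x0 + \sum_j `|b j 0|).
have clK : closed K.
  apply: (@preimage_closed _ _ (fun r => enorm (A *m r^T - b)) [set t | t <= delta]).
    by move=> r _; apply: enorm_continuous => i; exact: affine_coord_continuous.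
  exact: closed_le.
have fc : continuous (fun r : 'rV[R]_n => norm1_on S r^T).
  by apply: norm1_on_continuous => i; exact: trmx_coord_continuous.
have proj_good y : enorm (A *m y - b) <= delta -> norm1_on S y <= norm1_on S x0 ->
    K (proj y)^T /\ forall i, `|(proj y)^T 0 i| <= C i.
  move=> y_feas y_le; split; first by rewrite /K /= trmxK proj_mulmx.
  move=> i; rewrite mxE; apply: le_trans (proj_coord_bound y i) _.
  by apply: ler_sum => k _; apply: ler_wpM2l => //; lra.
have K_ne : K !=set0 by exists x0^T; rewrite /K /= trmxK.
have reduce r : K r ->
    exists2 z, (K z /\ forall i, `|z 0 i| <= C i) & norm1_on S z^T <= norm1_on S r^T.
  rewrite /K /= => r_feas.
  have [r_le|r_gt] := leP (norm1_on S r^T) (norm1_on S x0).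
    by exists (proj r^T)^T; [exact: proj_good | rewrite trmxK proj_norm1_on].
  exists (proj x0)^T; first exact: proj_good.
  by rewrite trmxK proj_norm1_on ltW.
have [c Kc cmin] := continuous_min_box_rV clK fc K_ne reduce.
exists c^T => // y y_feas.
by rewrite -[y]trmxK; apply: cmin; rewrite /K /= trmxK.
Qed.

End L1OnFeasibleSet.

Lemma objectiveE (R : realType) n (rho : R) (x v : 'cV[R]_n) :
  objective rho x v = \sum_i ((1 - v i 0) + rho * (v i 0 * `|x i 0|)).
Proof.
rewrite /objective /dotv mulr_sumr -big_split /=.
by apply: eq_bigr => i _; rewrite !mxE mul1r.
Qed.

Lemma indicator_cV_unit (R : realType) n (S : {set 'I_n}) i :
  0 <= indicator_cV R S i 0 <= 1.
Proof. by rewrite mxE; case: (i \in S); rewrite /= ?lexx ?ler01. Qed.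

Lemma objective_indicator (R : realType) n (rho : R) (S : {set 'I_n}) (x : 'cV[R]_n) :
  objective rho x (indicator_cV R S) = rho * norm1_on S x + \sum_(i | i \notin S) 1.
Proof.
rewrite objectiveE (bigID (mem S)) /= /norm1_on mulr_sumr.
congr (_ + _); apply: eq_bigr => i; rewrite mxE.
  by move=> ->; rewrite subrr mul1r add0r.
by move=> /negbTE ->; rewrite subr0 mul0r mulr0 addr0.
Qed.

Lemma objective_indicator_le (R : realType) n (rho : R) (S : {set 'I_n}) (x y : 'cV[R]_n) :
  0 <= rho -> norm1_on S x <= norm1_on S y ->
  objective rho x (indicator_cV R S) <= objective rho y (indicator_cV R S).
Proof. by move=> rho_ge0 xy; rewrite !objective_indicator lerD2r ler_wpM2l. Qed.

(* The [i]-th summand is affine in [w i] with slope [rho |x i| - 1]. *)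
Lemma objective_ge_indicator (R : realType) n (rho : R) (x w : 'cV[R]_n) :
  0 < rho -> (forall i, 0 <= w i 0 <= 1) ->
  objective rho x (indicator_cV R [set i | rho * `|x i 0| < 1]) <= objective rho x w.
Proof.
move=> rho_gt0 w_unit; rewrite !objectiveE; apply: ler_sum => i _.
have /andP [w_ge0 w_le1] := w_unit i; have x_ge0 := normr_ge0 (x i 0).
rewrite mxE inE; case: ltrP => /= small; nra.
Qed.

Unset Implicit Arguments.
Theorem lemma3p1 (R : realType) (m n : nat) (A : 'M[R]_(m, n)) (b : 'cV[R]_m)
  (delta : R) :
  0 <= delta ->
  (exists x : 'cV[R]_n, enorm (A *m x - b) <= delta) ->
  forall rho : R, 0 < rho ->
  exists x v : 'cV[R]_n,
    feasible A b delta x v /\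
    (forall y w : 'cV[R]_n, feasible A b delta y w ->
       objective rho x v <= objective rho y w).
Proof.
move=> _ feasible_ne rho rho_gt0.
have [xS xS_feas xS_min] :=
  fin_all_exists2 (fun S => exists_norm1_on_min S feasible_ne).
pose value S := objective rho (xS S) (indicator_cV R S).
have [S0 _ S0_min] := @arg_minP _ R _ finset.set0 predT value isT.
exists (xS S0), (indicator_cV R S0); split.
  by split; [exact: xS_feas | exact: indicator_cV_unit].
move=> y w [y_feas w_unit].
pose T := [set i | rho * `|y i 0| < 1]%SET.
apply: le_trans (S0_min T isT) _.
have yT_le_yw := objective_ge_indicator y rho_gt0 w_unit.
apply: le_trans yT_le_yw.
exact: objective_indicator_le (ltW rho_gt0) (xS_min T y y_feas).
Qed.
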